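(* Let $\mathbf A=(A;\vee,\wedge,\cdot,\rightarrow,0,1)$ be a complete residuated lattice and let $I$, $J$ be arbitrary sets. (i) Let $\phi\colon A^I\to A^J$ and $\rho\colon A^J\to A^I$ form a Galois connection between $A^I$ and $A^J$ (i.e. $y\le \phi(x)$ iff $\rho(y)\le x$ for all $x\in A^I$, $y\in A^J$). Then $\phi$ is a $\phi$-type mapping if and only if $\rho$ is a $\rho$-type mapping. (ii) Let $\delta\colon A^I\to A^J$ and $\epsilon\colon A^J\to A^I$ form a reversed Galois connection between $A^I$ and $A^J$ (i.e. both are antitone and $y\le\delta(x)$ iff $x\le\epsilon(y)$ for all $x\in A^I$, $y\in A^J$). Then $\delta$ is a $\delta$-type mapping if and only if $\epsilon$ is a $\delta$-type mapping.
   Context: A residuated lattice is an algebra $\mathbf A=(A;\vee,\wedge,\cdot,\rightarrow,0,1)$ such that $(A;\vee,\wedge,0,1)$ is a bounded lattice, $(A;\cdot,1)$ is a commutative monoid, and $x\cdot y\le z$ iff $x\le y\rightarrow z$. It is complete if its lattice reduct is a complete lattice. For a set $K$, $A^K$ carries the componentwise operations and order. For $d\in A$, $d^K\in A^K$ denotes the diagonal element $d^K(k)=d$ for all $k\in K$. A mapping between complete lattices is infima preserving if $f(\bigwedge M)=\bigwedge f(M)$ for every subset $M$; suprema preserving if $f(\bigvee M)=\bigvee f(M)$ for every $M$; suprema reversing if $f(\bigvee M)=\bigwedge f(M)$ for every $M$. For sets $K,L$: a mapping $\phi\colon A^K\to A^L$ is a $\phi$-type mapping if it is infima preserving and $d^L\rightarrow\phi(x)=\phi(d^K\rightarrow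 x)$ for all $d\in A$, $x\in A^K$; a mapping $\rho\colon A^L\to A^K$ is a $\rho$-type mapping if it is suprema preserving and $d^K\cdot\rho(x)=\rho(d^L\cdot x)$ for all $d\in A$, $x\in A^L$; a mapping $\delta\colon A^K\to A^L$ is a $\delta$-type mapping if it is suprema reversing and $d^L\rightarrow\delta(x)=\delta(d^K\cdot x)$ for all $d\in A$, $x\in A^K$ (this applies in particular with $K=J$, $L=I$ for maps $A^J\to A^I$). *)

Set Implicit Arguments.

Record CRL := {
  car :> Type;
  le : car -> car -> Prop;
  join : car -> car -> car;
  meet : car -> car -> car;
  mul : car -> car -> car;
  imp : car -> car -> car;
  zero : car;
  one : car;
  sup : (car -> Prop) -> car;
  inf : (car -> Prop) -> car;
  le_refl : forall x, le x x;
  le_trans : forall x y z, le x y -> le y z -> le x z;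
  le_antisym : forall x y, le x y -> le y x -> x = y;
  join_ub_l : forall x y, le x (join x y);
  join_ub_r : forall x y, le y (join x y);
  join_lub : forall x y z, le x z -> le y z -> le (join x y) z;
  meet_lb_l : forall x y, le (meet x y) x;
  meet_lb_r : forall x y, le (meet x y) y;
  meet_glb : forall x y z, le z x -> le z y -> le z (meet x y);
  zero_bot : forall x, le zero x;
  one_top : forall x, le x one;
  mul_assoc : forall x y z, mul x (mul y z) = mul (mul x y) z;
  mul_comm : forall x y, mul x y = mul y x;
  mul_one : forall x, mul x one = x;
  residuation : forall x y z, le (mul x y) z <-> le x (imp y z);
  sup_ub : forall (M : car -> Prop) x, M x -> le x (sup M);
  sup_lub : forall (M : car -> Prop) z, (forall x, M x -> le x z) -> le (sup M) z;
  inf_lb : forall (M : car -> Prop) x, M x -> le (inf M) x;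
  inf_glb : forall (M : car -> Prop) z, (forall x, M x -> le z x) -> le z (inf M)
}.

Section Power.
Variable A : CRL.

Definition pw_le (K : Type) (x y : K -> A) : Prop := forall k, le A (x k) (y k).

Definition pw_sup (K : Type) (M : (K -> A) -> Prop) : K -> A :=
  fun k => sup A (fun a => exists x, M x /\ a = x k).
Definition pw_inf (K : Type) (M : (K -> A) -> Prop) : K -> A :=
  fun k => inf A (fun a => exists x, M x /\ a = x k).

Definition image (X Y : Type) (f : X -> Y) (M : X -> Prop) : Y -> Prop :=
  fun y => exists x, M x /\ y = f x.

Definition diag (K : Type) (d : A) : K -> A := fun _ => d.

Definition pw_imp (K : Type) (x y : K -> A) : K -> A := fun k => imp A (x k) (y k).
Definition pw_mul (K : Type) (x y : K -> A) : K -> A := fun k => mul A (x k) (y k).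

Definition infima_preserving (K L : Type) (f : (K -> A) -> (L -> A)) : Prop :=
  forall M, f (pw_inf M) = pw_inf (image f M).
Definition suprema_preserving (K L : Type) (f : (K -> A) -> (L -> A)) : Prop :=
  forall M, f (pw_sup M) = pw_sup (image f M).
Definition suprema_reversing (K L : Type) (f : (K -> A) -> (L -> A)) : Prop :=
  forall M, f (pw_sup M) = pw_inf (image f M).

Definition phi_type (K L : Type) (phi : (K -> A) -> (L -> A)) : Prop :=
  infima_preserving phi /\
  forall (d : A) (x : K -> A), pw_imp (@diag L d) (phi x) = phi (pw_imp (@diag K d) x).

Definition rho_type (K L : Type) (rho : (L -> A) -> (K -> A)) : Prop :=
  suprema_preserving rho /\
  forall (d : A) (x : L -> A), pw_mul (@diag K d) (rho x) = rho (pw_mul (@diag L d) x).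

Definition delta_type (K L : Type) (delta : (K -> A) -> (L -> A)) : Prop :=
  suprema_reversing delta /\
  forall (d : A) (x : K -> A), pw_imp (@diag L d) (delta x) = delta (pw_mul (@diag K d) x).

Definition antitone (K L : Type) (f : (K -> A) -> (L -> A)) : Prop :=
  forall x y, pw_le x y -> pw_le (f y) (f x).

Definition galois_connection (I J : Type)
  (phi : (I -> A) -> (J -> A)) (rho : (J -> A) -> (I -> A)) : Prop :=
  forall x y, pw_le y (phi x) <-> pw_le (rho y) x.

Definition reversed_galois_connection (I J : Type)
  (delta : (I -> A) -> (J -> A)) (eps : (J -> A) -> (I -> A)) : Prop :=
  antitone delta /\ antitone eps /\
  forall x y, pw_le y (delta x) <-> pw_le x (eps y).

End Power.

From Stdlib Require Import FunctionalExtensionality Setoid.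

(* Every claimed equation between elements of A^K is proved by comparing the
   sets of their lower (or upper) bounds: the adjunction moves a bound across
   phi/rho (or delta/eps), and residuation moves the scalar d between the
   product d^K · _ and the implication d^K -> _. *)

Section PointwiseOrder.
Variable A : CRL.
Variable K : Type.

Lemma pw_eq_of_lower_bounds (a b : K -> A) :
  (forall z, pw_le A z a <-> pw_le A z b) -> a = b.
Proof.
  intro H. extensionality k. apply (le_antisym A).
  - apply (proj1 (H a)). intro; apply le_refl.
  - apply (proj2 (H b)). intro; apply le_refl.
Qed.

Lemma pw_eq_of_upper_bounds (a b : K -> A) :
  (forall z, pw_le A a z <-> pw_le A b z) -> a = b.
Proof.
  intro H. extensionality k. apply (le_antisym A).
  - apply (proj2 (H b)). intro; apply le_refl.
  - apply (proj1 (H a)). intro; apply le_refl.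
Qed.

Lemma pw_le_inf_iff (M : (K -> A) -> Prop) z :
  pw_le A z (pw_inf A M) <-> forall x, M x -> pw_le A z x.
Proof.
  split.
  - intros H x Mx k. eapply le_trans; [apply H | apply inf_lb; exists x; auto].
  - intros H k. apply inf_glb. intros a [x [Mx ->]]. apply H; auto.
Qed.

Lemma pw_sup_le_iff (M : (K -> A) -> Prop) z :
  pw_le A (pw_sup A M) z <-> forall x, M x -> pw_le A x z.
Proof.
  split.
  - intros H x Mx k. eapply le_trans; [| apply H]. apply sup_ub. exists x; auto.
  - intros H k. apply sup_lub. intros a [x [Mx ->]]. apply H; auto.
Qed.

Lemma pw_residuation (d : A) (y z : K -> A) :
  pw_le A (pw_mul A (@diag A K d) y) z <-> pw_le A y (pw_imp A (@diag A K d) z).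
Proof.
  unfold pw_le, pw_mul, pw_imp, diag. split; intros H k.
  - apply residuation. rewrite mul_comm. apply H.
  - rewrite mul_comm. apply residuation. apply H.
Qed.

Lemma forall_image_iff (L : Type) (f : (K -> A) -> (L -> A)) (M : (K -> A) -> Prop)
    (P : (L -> A) -> Prop) :
  (forall y, image f M y -> P y) <-> (forall x, M x -> P (f x)).
Proof.
  split.
  - intros H x Mx. apply H. exists x; auto.
  - intros H y [x [Mx ->]]. auto.
Qed.

End PointwiseOrder.

Section GaloisConnection.
Variable A : CRL.
Variables K L : Type.
Variable phi : (K -> A) -> (L -> A).
Variable rho : (L -> A) -> (K -> A).
Hypothesis adj : forall x y, pw_le A y (phi x) <-> pw_le A (rho y) x.

Lemma galois_infima_preserving : infima_preserving A phi.
Proof.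
  intro M. apply pw_eq_of_lower_bounds. intro z.
  rewrite pw_le_inf_iff, adj, pw_le_inf_iff, forall_image_iff.
  split; intros H x Mx; apply adj, H; auto.
Qed.

Lemma galois_suprema_preserving : suprema_preserving A rho.
Proof.
  intro M. apply pw_eq_of_upper_bounds. intro z.
  rewrite <- adj, !pw_sup_le_iff, forall_image_iff.
  split; intros H x Mx; apply adj, H; auto.
Qed.

Lemma galois_mul_diag_of_imp_diag :
  (forall d x, pw_imp A (@diag A L d) (phi x) = phi (pw_imp A (@diag A K d) x)) ->
  forall d y, pw_mul A (@diag A K d) (rho y) = rho (pw_mul A (@diag A L d) y).
Proof.
  intros Hphi d y. apply pw_eq_of_upper_bounds. intro z.
  rewrite pw_residuation, <- adj, <- Hphi, <- pw_residuation, adj. reflexivity.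
Qed.

Lemma galois_imp_diag_of_mul_diag :
  (forall d y, pw_mul A (@diag A K d) (rho y) = rho (pw_mul A (@diag A L d) y)) ->
  forall d x, pw_imp A (@diag A L d) (phi x) = phi (pw_imp A (@diag A K d) x).
Proof.
  intros Hrho d x. apply pw_eq_of_lower_bounds. intro z.
  rewrite <- pw_residuation, adj, <- Hrho, adj. apply pw_residuation.
Qed.

Lemma galois_phi_type_iff_rho_type : phi_type A phi <-> rho_type A rho.
Proof.
  split.
  - intros [_ Hphi]. split.
    + exact galois_suprema_preserving.
    + exact (galois_mul_diag_of_imp_diag Hphi).
  - intros [_ Hrho]. split.
    + exact galois_infima_preserving.
    + exact (galois_imp_diag_of_mul_diag Hrho).
Qed.

End GaloisConnection.

Section ReversedGaloisConnection.
Variable A : CRL.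
Variables K L : Type.
Variable delta : (K -> A) -> (L -> A).
Variable eps : (L -> A) -> (K -> A).
Hypothesis adj : forall x y, pw_le A y (delta x) <-> pw_le A x (eps y).

Lemma reversed_galois_suprema_reversing : suprema_reversing A eps.
Proof.
  intro M. apply pw_eq_of_lower_bounds. intro z.
  rewrite pw_le_inf_iff, <- adj, pw_sup_le_iff, forall_image_iff.
  split; intros H y My; apply adj, H; auto.
Qed.

Lemma reversed_galois_delta_type : delta_type A delta -> delta_type A eps.
Proof.
  intros [_ Hdelta]. split.
  - exact reversed_galois_suprema_reversing.
  - intros d y. apply pw_eq_of_lower_bounds. intro z.
    rewrite <- pw_residuation, <- adj, <- Hdelta, <- pw_residuation, adj.
    reflexivity.
Qed.

End ReversedGaloisConnection.

Theorem lemma4 (A : CRL) (I J : Type) :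
  (forall (phi : (I -> A) -> (J -> A)) (rho : (J -> A) -> (I -> A)),
      galois_connection A phi rho ->
      (phi_type A phi <-> rho_type A rho)) /\
  (forall (delta : (I -> A) -> (J -> A)) (eps : (J -> A) -> (I -> A)),
      reversed_galois_connection A delta eps ->
      (delta_type A delta <-> delta_type A eps)).
Proof.
  split.
  - intros phi rho adj. apply galois_phi_type_iff_rho_type, adj.
  - (* Antitonicity of delta and eps already follows from the adjunction. *)
    intros delta eps [_ [_ adj]]. split.
    + apply reversed_galois_delta_type, adj.
    + apply reversed_galois_delta_type. intros y x. symmetry. apply adj.
Qed.
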